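(* Let $G$ be a finite group with identity $\xi$, let $S$ be a non-empty inverse-closed subset of $G$ with $\xi\notin S$, and let $d_\Gamma$ be the graph metric of the Cayley graph $\mathrm{Cay}(G,S)$. Let $d$ be a positive integer and let $C\subseteq G$ be a code with $\min\{d_\Gamma(c,c')\,:\,c,c'\in C,\ c\neq c'\}\geq d$. Let $H$ be a subgroup of $G$, let $X=\{Ha_1,\dots,Ha_m\}$ be the set of right cosets of $H$ in $G$ (so $m=|G|/|H|$), and let $T=S^{\lfloor\frac{d-1}{2}\rfloor}\cup\{\xi\}$. Then the optimal value of the integer program $$\text{maximize } \sum_{i=1}^{m}x_i\quad\text{subject to}\quad \Big(\sum_{t\in T}\rho_X^G(t)\Big)(x_1,\ldots,x_m)^t\leq |H|\,\mathbf{1},\qquad x_i\in\mathbb{Z},\ x_i\geq 0\ (1\leq i\leq m),$$ is at least $|C|$ (i.e., it is an upper bound on $|C|$), where $\mathbf{1}$ is the all-ones column vector of length $m$ and the inequality is entrywise.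
   Context: $\mathrm{Cay}(G,S)$ is the simple graph with vertex set $G$ in which $g,h$ are adjacent iff $gh^{-1}\in S$; $d_\Gamma(g,h)$ is the length of a shortest path between $g$ and $h$. For a positive integer $r$, $S^r=\{s_1\cdots s_t : s_1,\dots,s_t\in S,\ 1\leq t\leq r\}$. For the right cosets ordered as $Ha_1<\dots<Ha_m$, $\rho_X^G(g)$ is the $m\times m$ matrix whose $(i,j)$ entry is $1$ if $Ha_ig=Ha_j$ and $0$ otherwise. *)

From HB Require Import structures.
From mathcomp Require Import all_boot all_order all_algebra all_fingroup.
Set Implicit Arguments. Unset Strict Implicit. Unset Printing Implicit Defensive.
Import GRing.Theory Num.Theory.

Local Open Scope group_scope.

(* Adjacency in Cay(G,S), G = the whole finGroupType gT: g ~ h iff g h^-1 \in S. *)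
Definition cay_adj (gT : finGroupType) (S : {set gT}) : rel gT :=
  fun g h => g * h^-1 \in S.

Definition cay_walk (gT : finGroupType) (S : {set gT}) (g h : gT) (k : nat) : Prop :=
  exists p : seq gT, size p = k /\ path (cay_adj S) g p /\ last g p = h.

(* d_Gamma(g,h) >= d : there is no walk (hence no path) of length < d from g to h
   (distance +oo if disconnected). *)
Definition cay_dist_ge (gT : finGroupType) (S : {set gT}) (g h : gT) (d : nat) : Prop :=
  forall k, (k < d)%N -> ~ cay_walk S g h k.

Definition Spow (gT : finGroupType) (S : {set gT}) (r : nat) : {set gT} :=
  [set x | [exists t : 'I_r.+1, (0 < t)%N &&
      [exists s : (nat_of_ord t).-tuple gT,
          all (fun y => y \in S) s && (x == \prod_(y <- s) y)]]].

(* rho_X^G(g) for X the right cosets of H in G = [set: gT], ordered by enum. *)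
Definition rho_coset (gT : finGroupType) (H : {group gT}) (g : gT)
  : 'M[int]_(#|rcosets H [set: gT]|) :=
  \matrix_(i, j) ((enum_val i :* g == enum_val j)%:R)%R.

(** A code of minimum distance d in Cay(G,S) has pairwise disjoint balls of
    radius r = (d-1)/2, i.e. the map (t, c) |-> t c is injective on T x C with
    T = S^r u {1}.  Take x_X to be the number of codewords c with c^-1 in the
    right coset X.  Since X t runs over the right cosets, the X-th row of
    (sum_t rho(t)) x counts the pairs (t, c) with (t c)^-1 in X, which by
    injectivity is at most |X| = |H|; and the x_X add up to |C| because every
    c^-1 lies in exactly one right coset. *)

From HB Require Import structures.
From mathcomp Require Import all_boot all_order all_algebra all_fingroup zify.
Import GRing.Theory Num.Theory.

Set Implicit Arguments.
Unset Strict Implicit.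
Unset Printing Implicit Defensive.

Local Open Scope group_scope.

Lemma prod_rev_map_invg (gT : finGroupType) (s : seq gT) :
  \prod_(y <- rev [seq y^-1 | y <- s]) y = (\prod_(y <- s) y)^-1.
Proof.
elim: s => [|a s IHs] /=; first by rewrite big_nil invg1.
by rewrite rev_cons big_rcons IHs big_cons invMg.
Qed.

Section CayleyBalls.

Variables (gT : finGroupType) (S : {set gT}).

Lemma cay_walk_word (w : seq gT) (g : gT) :
  all [in S] w -> cay_walk S ((\prod_(y <- w) y) * g) g (size w).
Proof.
elim: w => [|a w IHw] /=; first by exists [::]; rewrite big_nil mul1g.
case/andP=> aS /IHw [p [size_p [path_p last_p]]].
exists ((\prod_(y <- w) y) * g :: p); split=> //=; first by rewrite size_p.
by rewrite /cay_adj big_cons -(mulgA a) mulgK aS.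
Qed.

Lemma Spow1_word (r : nat) (t : gT) :
  t \in Spow S r :|: [set 1] ->
  exists2 w : seq gT, all [in S] w & (size w <= r)%N /\ t = \prod_(y <- w) y.
Proof.
case/setUP; last by rewrite inE => /eqP ->; exists [::]; rewrite ?big_nil.
rewrite inE => /existsP [k /andP [_ /existsP [w /andP [wS /eqP ->]]]].
by exists w => //; rewrite size_tuple -ltnS ltn_ord.
Qed.

Hypothesis S_inv : forall s, s \in S -> s^-1 \in S.

Lemma ball_code_mul_inj (r d : nat) (C : {set gT}) :
  (r + r < d)%N ->
  (forall c c', c \in C -> c' \in C -> c != c' -> cay_dist_ge S c c' d) ->
  {in setX (Spow S r :|: [set 1]) C &, injective (fun p => p.1 * p.2)}.
Proof.
move=> r2_lt_d C_dist [t c] [t' c'] /setXP [tT cC] /setXP [t'T c'C] /= tc_eq.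
suff eq_c : c = c' by move: tc_eq; rewrite eq_c => /mulIg ->.
have [//|/(C_dist c c' cC c'C) no_short_walk] := eqVneq c c'; exfalso.
have [w wS [size_w t_eq]] := Spow1_word tT.
have [u uS [size_u t'_eq]] := Spow1_word t'T.
have wuS : all [in S] (rev [seq y^-1 | y <- w] ++ u).
  by rewrite all_cat all_rev all_map uS andbT; apply/allP=> y /(allP wS) /S_inv.
have := cay_walk_word c' wuS.
rewrite big_cat /= prod_rev_map_invg -mulgA -t'_eq -tc_eq -t_eq mulKg.
rewrite size_cat size_rev size_map.
by apply: no_short_walk; apply: leq_ltn_trans r2_lt_d; apply: leq_add.
Qed.

End CayleyBalls.

Section CosetCounting.

Variables (gT : finGroupType) (H : {group gT}).

Definition coset_count (C X : {set gT}) : nat := #|[set c in C | c^-1 \in X]|.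

Lemma rcosetsT_mulg (X : {set gT}) (g : gT) :
  X \in rcosets H [set: gT] -> X :* g \in rcosets H [set: gT].
Proof.
case/rcosetsP=> a _ ->; rewrite -rcosetM.
by apply/rcosetsP; exists (a * g); rewrite ?inE.
Qed.

Lemma sum_coset_count (C : {set gT}) :
  \sum_(X in rcosets H [set: gT]) coset_count C X = #|C|.
Proof.
under eq_bigr => X _ do rewrite /coset_count -sum1dep_card big_mkcondr /=.
rewrite exchange_big /= -sum1_card; apply: eq_bigr => c _.
have Hc : H :* c^-1 \in rcosets H [set: gT].
  by apply/rcosetsP; exists c^-1; rewrite ?inE.
rewrite (bigD1 (H :* c^-1)) //= rcoset_refl big1 ?addn0 // => X /andP [XH neX].
case: ifP => // cX; case/eqP: neX.
by case/rcosetsP: XH cX => a _ -> /rcoset_eqP.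
Qed.

Lemma sum_coset_count_translates (T C X : {set gT}) :
  {in setX T C &, injective (fun p => p.1 * p.2)} ->
  X \in rcosets H [set: gT] ->
  (\sum_(t in T) coset_count C (X :* t) <= #|H|)%N.
Proof.
move=> mul_inj /rcosetsP [a _ ->].
under eq_bigr => t _ do rewrite /coset_count -sum1dep_card.
rewrite pair_big_dep /= sum1dep_card.
set P := [set p | _].
have P_TC : P \subset setX T C.
  by apply/subsetP=> -[t c]; rewrite !inE /= => /and3P [-> ->].
have inv_mul_inj : {in P &, injective (fun p => (p.1 * p.2)^-1)}.
  by move=> p q pP qP /invg_inj; apply: mul_inj; apply: (subsetP P_TC).
rewrite -(card_in_imset inv_mul_inj) -(card_rcoset H a).
apply/subset_leq_card/subsetP=> _ /imsetP [[t c] + ->].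
by rewrite !inE mem_rcoset invMg => /and3P [].
Qed.

Lemma rho_coset_mul_col (F : {set gT} -> int) (g : gT)
    (i : 'I_#|rcosets H [set: gT]|) (k : 'I_1) :
  (rho_coset H g *m \col_j F (enum_val j))%R i k = F (enum_val i :* g).
Proof.
have Xg := rcosetsT_mulg g (enum_valP i).
rewrite !mxE (bigD1 (enum_rank_in Xg (enum_val i :* g))) //=.
rewrite !mxE enum_rankK_in // eqxx mul1r big1 ?addr0 // => j ne_j.
rewrite !mxE; case: eqP => [eq_j|]; last by rewrite mul0r.
by case/eqP: ne_j; apply: enum_val_inj; rewrite enum_rankK_in.
Qed.

End CosetCounting.

Theorem theorem2p14 (gT : finGroupType) (S : {set gT})
  (S_ne0 : S != set0)
  (S_inv : forall s, s \in S -> (s^-1)%g \in S)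
  (S_1 : (1%g : gT) \notin S)
  (d : nat) (d_gt0 : (0 < d)%N)
  (C : {set gT})
  (C_dist : forall c c', c \in C -> c' \in C -> c != c' -> cay_dist_ge S c c' d)
  (H : {group gT}) :
  let T := (Spow S (d.-1)./2 :|: [set 1%g])%g in
  let A := (\sum_(t in T) rho_coset H t)%R in
  exists x : 'cV[int]_(#|rcosets H [set: gT]|),
    [/\ forall i, (0 <= x i 0)%R,
        forall i, ((A *m x) i 0 <= (#|H|)%:Z)%R
      & ((#|C|)%:Z <= \sum_i x i 0)%R].
Proof.
move=> T A.
have r2_lt_d : ((d.-1)./2 + (d.-1)./2 < d)%N by lia.
pose x X := (coset_count C X)%:Z%R.
exists (\col_i x (enum_val i))%R; split.
- by move=> i; rewrite mxE.
- move=> i; rewrite mulmx_suml summxE.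
  under eq_bigr => t _ do rewrite rho_coset_mul_col /x -natz.
  rewrite -natr_sum -natz ler_nat; apply: sum_coset_count_translates (enum_valP i).
  exact: (ball_code_mul_inj S_inv r2_lt_d C_dist).
- under eq_bigr => i _ do rewrite mxE /x -natz.
  by rewrite -natr_sum -natz ler_nat -(big_enum_val (coset_count C)) sum_coset_count.
Qed.
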